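(* Let $A$ and $B$ be automata and let $(b,n)$ be a normed backward simulation from $A$ to $B$. Then (1) $[A,B]\in b$, i.e., every finite execution of $A$ is $b$-related to some finite execution of $B$; (2) if moreover $b$ is image-finite (i.e., $b[s]$ is finite for every $s\in\mathrm{states}(A)$), then $(A,B)\in b$, i.e., every execution of $A$ is $b$-related to some execution of $B$.
   Context: An automaton $A$ consists of a set $\mathrm{states}(A)$ of states, a nonempty set $\mathrm{start}(A)\subseteq\mathrm{states}(A)$ of start states, a set $\mathrm{acts}(A)$ of actions containing a distinguished internal action $\tau$, and a set $\mathrm{steps}(A)\subseteq\mathrm{states}(A)\times\mathrm{acts}(A)\times\mathrm{states}(A)$ of steps; write $s\xrightarrow{a}_A t$ for $(s,a,t)\in\mathrm{steps}(A)$. An execution fragment of $A$ is a finite or infinite alternating sequence $s_0a_1s_1a_2s_2\cdots$ of states and actions, beginning with a state and, if finite, ending with a state, such that $s_{i-1}\xrightarrow{a_i}_A s_i$ for all $i>0$; its index set $\mathrm{Index}(\alpha)$ is the set of indices $i$ of its states $s_i$. An execution is an execution fragment whose first state is a start state. For a relation $R$ write $R[s]=\{u\mid (s,u)\in R\}$. Execution correspondence: Let $R\subseteq\mathrm{states}(A)\times\mathrm{states}(B)$ and let $\alpha=s_0a_1s_1\cdots$ and $\alpha'=u_0b_1u_1\cdots$ be execution fragments of $A$ and $B$. An index relation over $R$ between $\alpha$ and $\alpha'$ is a relation $I\subseteq\mathrm{Index}(\alpha)\times\mathrm{Index}(\alpha')$ such that (1) $(i,j)\in I$ implies $(s_i,u_j)\in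 R$; (2) $(i,j)\in I$, $(i',j')\in I$ and $i<i'$ imply $j\le j'$; (3) every index of $\alpha$ is related by $I$ to some index of $\alpha'$ and every index of $\alpha'$ is related by $I$ to some index of $\alpha$; (4) if $(i,j),(i+1,j+1)\in I$ then $a_{i+1}=b_{j+1}$; if $(i,j),(i+1,j)\in I$ then $a_{i+1}=\tau$; if $(i,j),(i,j+1)\in I$ then $b_{j+1}=\tau$. The fragments $\alpha,\alpha'$ are $R$-related, written $(\alpha,\alpha')\in R$, if such an $I$ exists. Write $(A,B)\in R$ if every execution of $A$ is $R$-related to some execution of $B$, and $[A,B]\in R$ if every finite execution of $A$ is $R$-related to some finite execution of $B$. A normed backward simulation from $A$ to $B$ is a pair $(b,n)$ where $b\subseteq\mathrm{states}(A)\times\mathrm{states}(B)$ is total (every $s\in\mathrm{states}(A)$ has $b[s]\neq\emptyset$) and $n:(\mathrm{steps}(A)\cup\mathrm{start}(A))\times\mathrm{states}(B)\to S$ for some set $S$ with a well-founded strict order $<$, such that: (1) if $s\in\mathrm{start}(A)$ and $u\in b[s]$ then (a) $u\in\mathrm{start}(B)$, or (b) there is $v\in b[s]$ with $v\xrightarrow{\tau}_B u$ and $n(s,v)<n(s,u)$; (2) if $t\xrightarrow{a}_A s$ and $u\in b[s]$ then (a) $u\in b[t]$ and $a=\tau$, or (b) there is $v\in b[t]$ with $v\xrightarrow{a}_B u$, or (c) there is $v\in b[s]$ with $v\xrightarrow{\tau}_B u$ and $n(t\xrightarrow{a}s,v)<n(t\xrightarrow{a}s,u)$. *)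

From Stdlib Require Import List Relations Wellfounded.



Record automaton (Act : Type) (tau : Act) : Type := {
  state : Type;
  start : state -> Prop;
  start_nonempty : exists s, start s;
  step : state -> Act -> state -> Prop
}.

Arguments automaton {Act} _.
Arguments state {Act tau} _.
Arguments start {Act tau} _ _.
Arguments step {Act tau} _ _ _ _.

(* A (finite or infinite) alternating sequence s_0 a_1 s_1 a_2 s_2 ...
   [fst i] = s_i, [fact i] = a_i (for i >= 1; [fact 0] is irrelevant),
   [flen = Some k]: finite, indices 0..k ; [flen = None]: infinite. *)
Record frag (Act X : Type) : Type := {
  fst : nat -> X;
  fact : nat -> Act;
  flen : option nat
}.

Arguments fst {Act X} _ _.
Arguments Build_frag {Act X} _ _ _.
Arguments fact {Act X} _ _.
Arguments flen {Act X} _.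

Definition Index {Act X : Type} (al : frag Act X) (i : nat) : Prop :=
  match flen al with
  | Some k => i <= k
  | None => True
  end.

Definition is_finite {Act X : Type} (al : frag Act X) : Prop :=
  exists k, flen al = Some k.

Definition exec_fragment {Act : Type} {tau : Act} (A : automaton tau)
  (al : frag Act (state A)) : Prop :=
  forall i, Index al (S i) -> step A (fst al i) (fact al (S i)) (fst al (S i)).

Definition execution {Act : Type} {tau : Act} (A : automaton tau)
  (al : frag Act (state A)) : Prop :=
  exec_fragment A al /\ start A (fst al 0).

Definition index_relation {Act : Type} {tau : Act} {A B : automaton tau}
  (R : state A -> state B -> Prop)
  (al : frag Act (state A)) (al' : frag Act (state B))
  (I : nat -> nat -> Prop) : Prop :=
  (forall i j, I i j -> Index al i /\ Index al' j) /\
  (forall i j, I i j -> R (fst al i) (fst al' j)) /\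
  (forall i j i' j', I i j -> I i' j' -> i < i' -> j <= j') /\
  (forall i, Index al i -> exists j, I i j) /\
  (forall j, Index al' j -> exists i, I i j) /\
  (forall i j, I i j -> I (S i) (S j) -> fact al (S i) = fact al' (S j)) /\
  (forall i j, I i j -> I (S i) j -> fact al (S i) = tau) /\
  (forall i j, I i j -> I i (S j) -> fact al' (S j) = tau).

Definition R_related {Act : Type} {tau : Act} {A B : automaton tau}
  (R : state A -> state B -> Prop)
  (al : frag Act (state A)) (al' : frag Act (state B)) : Prop :=
  exists I, index_relation R al al' I.

Definition exec_corr {Act : Type} {tau : Act} (A B : automaton tau)
  (R : state A -> state B -> Prop) : Prop :=
  forall al, execution A al ->
    exists al', execution B al' /\ R_related R al al'.

Definition fin_exec_corr {Act : Type} {tau : Act} (A B : automaton tau)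
  (R : state A -> state B -> Prop) : Prop :=
  forall al, execution A al -> is_finite al ->
    exists al', execution B al' /\ is_finite al' /\ R_related R al al'.

Definition norm_dom {Act : Type} {tau : Act} (A : automaton tau) : Type :=
  ({ s : state A | start A s } +
   { x : state A * Act * state A |
       let '(t, a, s) := x in step A t a s })%type.

Definition strict_wf_order {S : Type} (lt : S -> S -> Prop) : Prop :=
  (forall x, ~ lt x x) /\ (forall x y z, lt x y -> lt y z -> lt x z) /\
  well_founded lt.

Definition normed_backward_simulation {Act : Type} {tau : Act}
  (A B : automaton tau) (b : state A -> state B -> Prop)
  (S : Type) (lt : S -> S -> Prop) (n : norm_dom A -> state B -> S) : Prop :=
  strict_wf_order lt /\
  (forall s : state A, exists u, b s u) /\
  (forall (s : state A) (Hs : start A s) (u : state B), b s u ->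
     start B u \/
     exists v, b s v /\ step B v tau u /\
       lt (n (inl (exist _ s Hs)) v) (n (inl (exist _ s Hs)) u)) /\
  (forall (t : state A) (a : Act) (s : state A) (H : step A t a s) (u : state B),
     b s u ->
     (b t u /\ a = tau) \/
     (exists v, b t v /\ step B v a u) \/
     (exists v, b s v /\ step B v tau u /\
        lt (n (inr (exist (fun x : state A * Act * state A =>
                              let '(t, a, s) := x in step A t a s)
                           (t, a, s) H)) v)
           (n (inr (exist (fun x : state A * Act * state A =>
                              let '(t, a, s) := x in step A t a s)
                           (t, a, s) H)) u))).

Definition image_finite {X Y : Type} (b : X -> Y -> Prop) : Prop :=
  forall s, exists l : list Y, forall u, b s u -> In u l.

From Stdlib Require Import Arith Lia List Wellfounded Classical ClassicalEpsilon.

(* Norm induction on the simulation clauses shows that for every A-step t -a-> s and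
   every u in b[s] there is a B-path from some v in b[t] to u which is either a stutter
   (a = tau, v = u) or an a-step, followed by tau-steps that stay inside b[s]; similarly
   every u in b[s_0] is reached from a start state of B by tau-steps inside b[s_0].
   For a finite execution such segments are chained backwards from any B-state related
   to its last state.  For an infinite one, image-finiteness makes the levels b[s_k]
   finite, so Koenig's lemma yields an infinite chain of segments.  Concatenating the
   segments of a chain gives the B-execution, the k-th segment being the block of
   B-indices related to the A-index k+1. *)

Lemma list_pigeonhole_antitone {X : Type} (l : list X) (P : X -> nat -> Prop) :
  (forall x m m', m' <= m -> P x m -> P x m') ->
  (forall m, exists x, In x l /\ P x m) -> exists x, In x l /\ forall m, P x m.
Proof.
  intros Hanti. induction l as [|x l IH]; intros Hall.
  - destruct (Hall 0) as [? [[] _]].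
  - destruct (classic (forall m, P x m)) as [Hx|Hx]; [exists x; simpl; auto|].
    apply not_all_ex_not in Hx as [m0 Hm0].
    destruct IH as [y [Hy HPy]].
    + intro m. destruct (Hall (max m m0)) as [y [[Hxy|Hy] HPy]].
      * subst y. exfalso. apply Hm0, (Hanti x (max m m0)); [lia|auto].
      * exists y. split; [auto|]. apply (Hanti y (max m m0)); [lia|auto].
    + exists y. simpl. auto.
Qed.

Lemma sup_exists (h : nat -> nat) : exists fl : option nat, forall j,
  match fl with Some M => j <= M | None => True end <-> exists k, j <= h k.
Proof.
  destruct (classic (exists k, forall k', h k' <= h k)) as [[k Hmax]|Hnomax].
  - exists (Some (h k)). intro j. split; [eauto|]. intros [k' Hj]. specialize (Hmax k'). lia.
  - exists None. intro j. split; [intros _|auto].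
    induction j as [|j [k Hj]]; [exists 0; lia|].
    apply NNPP. intro Hno. apply Hnomax. exists k. intro k'.
    assert (~ S j <= h k') by eauto. lia.
Qed.

Lemma stable_limit {X : Type} (F : nat -> nat -> X) (h : nat -> nat) :
  (forall k k', k <= k' -> h k <= h k') ->
  (forall k j, j <= h k -> F (S k) j = F k j) ->
  exists w : nat -> X, forall k j, j <= h k -> w j = F k j.
Proof.
  intros Hmono Hstab.
  assert (Hagree : forall k k' j, k <= k' -> j <= h k -> F k' j = F k j).
  { intros k k' j Hk Hj. induction Hk as [|k' Hk IH]; [reflexivity|].
    rewrite Hstab; [exact IH|]. specialize (Hmono k k' Hk). lia. }
  destruct (choice (fun j k => (exists k', j <= h k') -> j <= h k)) as [K HK].
  { intro j. destruct (classic (exists k', j <= h k')) as [[k' Hk']|Hn].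
    - exists k'. auto.
    - exists 0. tauto. }
  exists (fun j => F (K j) j). intros k j Hj.
  pose proof (HK j (ex_intro _ k Hj)) as HKj.
  destruct (le_ge_dec (K j) k) as [Hle|Hge].
  - symmetry. apply Hagree; assumption.
  - apply Hagree; assumption.
Qed.

Definition upd {X : Type} (f : nat -> X) (m : nat) (x : X) : nat -> X :=
  fun j => if Nat.eqb j m then x else f j.

Lemma upd_eq {X : Type} (f : nat -> X) m x : upd f m x m = x.
Proof. unfold upd. now rewrite Nat.eqb_refl. Qed.

Lemma upd_neq {X : Type} (f : nat -> X) m x j : j <> m -> upd f m x j = f j.
Proof. intro H. unfold upd. now rewrite (proj2 (Nat.eqb_neq j m) H). Qed.

Section Koenig.
Context {X : Type} (L : nat -> X -> Prop) (E : nat -> X -> X -> Prop).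

Definition chain (g : nat -> X) (k m : nat) : Prop :=
  forall i, k <= i -> i < m -> L (S i) (g (S i)) /\ E i (g i) (g (S i)).

Hypothesis pred_in_level : forall k u, L (S k) u -> exists v, L k v /\ E k v u.

Lemma backward_chain m u : L m u -> exists g, g m = u /\ L 0 (g 0) /\ chain g 0 m.
Proof.
  revert u. induction m as [|m IH]; intros u Hu.
  - exists (fun _ => u). split; [reflexivity|]. split; [exact Hu|]. intros i _ Hi. lia.
  - destruct (pred_in_level m u Hu) as [v [Hv Hvu]].
    destruct (IH v Hv) as [g [Hgm [Hg0 Hg]]].
    exists (upd g (S m) u). split; [apply upd_eq|].
    split; [rewrite upd_neq by lia; exact Hg0|].
    intros i _ Hi. rewrite (upd_neq g (S m) u i) by lia.
    destruct (Nat.eq_dec i m) as [->|Him].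
    + rewrite upd_eq, Hgm. auto.
    + rewrite upd_neq by lia. apply Hg; lia.
Qed.

Hypothesis levels_finite : forall k, exists l, forall x, L k x -> In x l.
Hypothesis levels_nonempty : forall k, exists x, L k x.

Definition extendable (k : nat) (v : X) : Prop :=
  forall m, exists g, g k = v /\ chain g k m.

Lemma chain_antitone g k m m' : m' <= m -> chain g k m -> chain g k m'.
Proof. intros Hm Hc i Hi1 Hi2. apply Hc; lia. Qed.

Lemma extendable_root : exists v, L 0 v /\ extendable 0 v.
Proof.
  destruct (levels_finite 0) as [l Hl].
  destruct (list_pigeonhole_antitone l
              (fun v m => L 0 v /\ exists g, g 0 = v /\ chain g 0 m)) as [v [_ Hv]].
  - intros v m m' Hm [HL [g [Hg Hc]]]. split; [exact HL|].
    exists g. split; [exact Hg|]. exact (chain_antitone g 0 m m' Hm Hc).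
  - intro m. destruct (levels_nonempty m) as [u Hu].
    destruct (backward_chain m u Hu) as [g [_ [Hg0 Hc]]].
    exists (g 0). split; [apply Hl, Hg0|]. split; [exact Hg0|]. exists g. auto.
  - exists v. split; [apply (Hv 0)|]. intro m. apply Hv.
Qed.

Lemma extendable_step k v :
  extendable k v -> exists v', L (S k) v' /\ E k v v' /\ extendable (S k) v'.
Proof.
  intro Hv. destruct (levels_finite (S k)) as [l Hl].
  destruct (list_pigeonhole_antitone l
              (fun v' m => L (S k) v' /\ E k v v' /\
                           exists g, g (S k) = v' /\ chain g (S k) m)) as [v' [_ Hv']].
  - intros v' m m' Hm (HL & HE & g & Hg & Hc). split; [exact HL|]. split; [exact HE|].
    exists g. split; [exact Hg|]. exact (chain_antitone g (S k) m m' Hm Hc).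
  - intro m. destruct (Hv (S (max m k))) as [g [Hgk Hc]].
    destruct (Hc k) as [HL HE]; [lia|lia|]. rewrite Hgk in HE.
    exists (g (S k)). split; [auto|]. split; [auto|]. split; [auto|].
    exists g. split; [reflexivity|]. intros i Hi1 Hi2. apply Hc; lia.
  - destruct (Hv' 0) as (HL & HE & _). exists v'. repeat split; auto.
    intro m. apply Hv'.
Qed.

Theorem koenig : exists f, forall k, L k (f k) /\ E k (f k) (f (S k)).
Proof.
  destruct extendable_root as [v0 [Hv0 Hext0]].
  destruct (choice (fun (kv : nat * X) v' => let '(k, v) := kv in
              extendable k v -> L (S k) v' /\ E k v v' /\ extendable (S k) v'))
    as [next Hnext].
  { intros [k v]. destruct (classic (extendable k v)) as [H|H].
    - destruct (extendable_step k v H) as [v' ?]. eauto.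
    - exists v. tauto. }
  set (f := fix f k := match k with 0 => v0 | S k => next (k, f k) end).
  assert (Hf : forall k, L k (f k) /\ extendable k (f k)).
  { induction k as [|k [_ IH]]; [auto|].
    destruct (Hnext (k, f k) IH) as (? & _ & ?). auto. }
  exists f. intro k. split; [apply Hf|].
  apply (Hnext (k, f k)), Hf.
Qed.

End Koenig.

Section FinitePaths.
Context {Act : Type} {tau : Act} (B : automaton tau).

Definition path (w : nat -> state B) (c : nat -> Act) (m : nat) : Prop :=
  forall j, j < m -> step B (w j) (c (S j)) (w (S j)).

Definition tau_block (Q : state B -> Prop) (w : nat -> state B) (c : nat -> Act)
    (lo hi : nat) : Prop :=
  lo <= hi /\ (forall j, lo <= j -> j <= hi -> Q (w j)) /\
  (forall j, lo < j -> j <= hi -> c j = tau).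

Lemma path_agree w c w' c' m :
  (forall j, j <= m -> w' j = w j /\ c' j = c j) -> path w c m -> path w' c' m.
Proof.
  intros Hag Hp j Hj.
  rewrite (proj1 (Hag j ltac:(lia))), (proj1 (Hag (S j) ltac:(lia))),
    (proj2 (Hag (S j) ltac:(lia))).
  apply Hp, Hj.
Qed.

Lemma tau_block_agree Q w c w' c' lo hi :
  (forall j, j <= hi -> w' j = w j /\ c' j = c j) ->
  tau_block Q w c lo hi -> tau_block Q w' c' lo hi.
Proof.
  intros Hag (Hle & HQ & Htau). split; [exact Hle|]. split.
  - intros j H1 H2. destruct (Hag j H2) as [-> _]. auto.
  - intros j H1 H2. destruct (Hag j H2) as [_ ->]. auto.
Qed.

(* The path pst 0 -> ... -> pst plen; its tau block starts at index [poff]. *)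
Record fin_path : Type := {
  pst : nat -> state B;
  pact : nat -> Act;
  plen : nat;
  poff : nat
}.

Definition tau_tail (Q : state B -> Prop) (p : fin_path) : Prop :=
  path (pst p) (pact p) (plen p) /\ tau_block Q (pst p) (pact p) (poff p) (plen p).

Definition initial_segment (Q : state B -> Prop) (u : state B) (p : fin_path) : Prop :=
  start B (pst p 0) /\ pst p (plen p) = u /\ poff p = 0 /\ tau_tail Q p.

Definition step_segment (P Q : state B -> Prop) (a : Act) (v u : state B)
    (p : fin_path) : Prop :=
  pst p 0 = v /\ pst p (plen p) = u /\ P v /\
  (poff p = 0 /\ a = tau \/ poff p = 1 /\ pact p 1 = a) /\ tau_tail Q p.

Definition stay (u : state B) : fin_path :=
  {| pst := fun _ => u; pact := fun _ => tau; plen := 0; poff := 0 |}.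

Lemma stay_tau_tail (Q : state B -> Prop) u : Q u -> tau_tail Q (stay u).
Proof.
  intro Hu. split; [intros j Hj; simpl in Hj; lia|].
  split; [simpl; lia|]. split; intros j _ _; simpl; auto.
Qed.

Definition snoc (p : fin_path) (u : state B) : fin_path := {|
  pst := upd (pst p) (S (plen p)) u;
  pact := upd (pact p) (S (plen p)) tau;
  plen := S (plen p);
  poff := poff p |}.

Lemma snoc_tau_tail Q p u :
  tau_tail Q p -> step B (pst p (plen p)) tau u -> Q u -> tau_tail Q (snoc p u).
Proof.
  intros [Hpath (Hle & HQ & Htau)] Hstep Hu. unfold tau_tail, path, tau_block. simpl.
  split; [|split; [lia|split]].
  - intros j Hj. rewrite (upd_neq _ _ _ j) by lia.
    destruct (Nat.eq_dec j (plen p)) as [->|Hj'].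
    + now rewrite !upd_eq.
    + rewrite !upd_neq by lia. apply Hpath. lia.
  - intros j H1 H2. destruct (Nat.eq_dec j (S (plen p))) as [->|Hj].
    + now rewrite upd_eq.
    + rewrite upd_neq by lia. apply HQ; lia.
  - intros j H1 H2. destruct (Nat.eq_dec j (S (plen p))) as [->|Hj].
    + now rewrite upd_eq.
    + rewrite upd_neq by lia. apply Htau; lia.
Qed.

Lemma snoc_fixes p u j :
  j <= plen p -> pst (snoc p u) j = pst p j /\ pact (snoc p u) j = pact p j.
Proof. intro Hj. simpl. now rewrite !upd_neq by lia. Qed.

Lemma snoc_last p u : pst (snoc p u) (plen (snoc p u)) = u.
Proof. apply upd_eq. Qed.

End FinitePaths.

Arguments pst {Act tau B} _ _.
Arguments pact {Act tau B} _ _.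
Arguments plen {Act tau B} _.
Arguments poff {Act tau B} _.
Arguments tau_tail {Act tau B} _ _.
Arguments initial_segment {Act tau B} _ _ _.
Arguments step_segment {Act tau B} _ _ _ _ _ _.
Arguments snoc {Act tau B} _ _.

Section SegmentExistence.
Context {Act : Type} {tau : Act} (A B : automaton tau) (b : state A -> state B -> Prop).
Context (NS : Type) (lt : NS -> NS -> Prop) (n : norm_dom A -> state B -> NS).
Hypothesis Hbs : normed_backward_simulation A B b NS lt n.

Lemma initial_segment_exists s (Hs : start A s) u :
  b s u -> exists p, initial_segment (b s) u p.
Proof.
  destruct Hbs as [[_ [_ Hwf]] [_ [Hinit _]]].
  induction u as [u IH]
    using (well_founded_ind (wf_inverse_image _ _ lt (n (inl (exist _ s Hs))) Hwf)).
  intro Hu.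
  destruct (Hinit s Hs u Hu) as [Hstart | (v & Hv & Hvu & Hlt)].
  - exists (stay B u). split; [exact Hstart|]. split; [reflexivity|].
    split; [reflexivity|]. apply stay_tau_tail, Hu.
  - destruct (IH v Hlt Hv) as [p (Hst & Hend & Hoff & Htail)].
    exists (snoc p u). split; [|split; [apply snoc_last|split; [exact Hoff|]]].
    + rewrite (proj1 (snoc_fixes B p u 0 (Nat.le_0_l _))). exact Hst.
    + apply snoc_tau_tail; [exact Htail| rewrite Hend; exact Hvu | exact Hu].
Qed.

Lemma step_segment_exists t a s (H : step A t a s) u :
  b s u -> exists v p, step_segment (b t) (b s) a v u p.
Proof.
  destruct Hbs as [[_ [_ Hwf]] [_ [_ Hstep]]].
  induction u as [u IH] using (well_founded_ind (wf_inverse_image _ _ lt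
    (n (inr (exist (fun x : state A * Act * state A => let '(t, a, s) := x in step A t a s)
                   (t, a, s) H))) Hwf)).
  intro Hu.
  destruct (Hstep t a s H u Hu) as [[Hbt Htau] | [(v & Hv & Hvu) | (w & Hw & Hwu & Hlt)]].
  - exists u, (stay B u). split; [reflexivity|]. split; [reflexivity|].
    split; [exact Hbt|]. split; [left; split; [reflexivity|exact Htau]|].
    apply stay_tau_tail, Hu.
  - exists v, {| pst := fun j => match j with 0 => v | _ => u end; pact := fun _ => a;
                 plen := 1; poff := 1 |}.
    repeat split; simpl; auto; intros j; try lia.
    + intros Hj. replace j with 0 by lia. exact Hvu.
    + intros H1 H2. replace j with 1 by lia. exact Hu.
  - destruct (IH w Hlt Hw) as (v & p & Hst & Hend & Hbv & Hlink & Htail).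
    exists v, (snoc p u).
    assert (Hoff : poff p <= plen p) by apply Htail.
    split; [|split; [apply snoc_last|split; [exact Hbv|split]]].
    + rewrite (proj1 (snoc_fixes B p u 0 (Nat.le_0_l _))). exact Hst.
    + destruct Hlink as [Hlink|[H1 H2]]; [left; exact Hlink|right; split; [exact H1|]].
      rewrite (proj2 (snoc_fixes B p u 1 ltac:(lia))). exact H2.
    + apply snoc_tau_tail; [exact Htail| rewrite Hend; exact Hwu | exact Hu].
Qed.

End SegmentExistence.

Lemma Index_down {Act X : Type} (al : frag Act X) i i' : i <= i' -> Index al i' -> Index al i.
Proof. unfold Index. destruct (flen al); auto. lia. Qed.

Section Blocks.
Context {Act : Type} {tau : Act} {A B : automaton tau} (b : state A -> state B -> Prop).
Context (al : frag Act (state A)) (al' : frag Act (state B)) (hi d : nat -> nat).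

(* A-index i is related to the B-indices [block_lo i, hi i].  With d i = 0 the blocks
   of i and i+1 share the B-index hi i, which is how a stuttering A-step is matched. *)
Definition block_lo (i : nat) : nat := match i with 0 => 0 | S i => hi i + d i end.

Hypothesis blocks : forall i, Index al i ->
  tau_block B (b (fst al i)) (fst al') (fact al') (block_lo i) (hi i).
Hypothesis links : forall i, Index al (S i) ->
  d i = 0 /\ fact al (S i) = tau \/ d i = 1 /\ fact al' (S (hi i)) = fact al (S i).
Hypothesis Index_hi : forall j, Index al' j <-> exists i, Index al i /\ j <= hi i.

Lemma hi_le_block_lo i i' : i < i' -> Index al i' -> hi i <= block_lo i'.
Proof.
  induction i' as [|i' IH]; intros Hlt Hi'; [lia|]. simpl.
  destruct (Nat.eq_dec i i') as [->|Hne]; [lia|].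
  assert (Hi : Index al i') by (apply (Index_down al i' (S i')); auto).
  destruct (blocks i' Hi) as [Hle _]. specialize (IH ltac:(lia) Hi). lia.
Qed.

Lemma block_cover i j : Index al i -> j <= hi i ->
  exists i0, i0 <= i /\ block_lo i0 <= j /\ j <= hi i0.
Proof.
  induction i as [|i IH]; intros Hi Hj; [exists 0; simpl; lia|].
  assert (Hi' : Index al i) by (apply (Index_down al i (S i)); auto).
  destruct (le_lt_dec j (hi i)) as [Hle|Hlt].
  - destruct (IH Hi' Hle) as (i0 & ? & ?). exists i0. split; [lia|auto].
  - exists (S i). simpl. destruct (links i Hi) as [[-> _]|[-> _]]; lia.
Qed.

Lemma blocks_related : R_related b al al'.
Proof.
  exists (fun i j => Index al i /\ block_lo i <= j /\ j <= hi i).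
  split; [|split; [|split; [|split; [|split; [|split; [|split]]]]]].
  - intros i j (Hi & _ & Hj). split; [exact Hi|]. apply Index_hi. eauto.
  - intros i j (Hi & H1 & H2). apply (blocks i Hi); assumption.
  - intros i j i' j' (Hi & H1 & H2) (Hi' & H1' & H2') Hlt.
    pose proof (hi_le_block_lo i i' Hlt Hi'). lia.
  - intros i Hi. exists (hi i). destruct (blocks i Hi) as [Hle _]. auto.
  - intros j Hj. apply Index_hi in Hj as (i & Hi & Hj).
    destruct (block_cover i j Hi Hj) as (i0 & Hi0 & H1 & H2).
    exists i0. split; [apply (Index_down al i0 i); auto|auto].
  - intros i j (Hi & H1 & H2) (HSi & H1' & H2'). simpl in H1'.
    destruct (links i HSi) as [[Hd Htau]|[Hd Hact]].
    + rewrite Htau. destruct (le_lt_dec (S j) (hi i)).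
      * symmetry. apply (blocks i Hi); lia.
      * symmetry. apply (blocks (S i) HSi); simpl; lia.
    + replace j with (hi i) by lia. symmetry. exact Hact.
  - intros i j (Hi & H1 & H2) (HSi & H1' & H2'). simpl in H1'.
    destruct (links i HSi) as [[_ Htau]|[Hd _]]; [exact Htau|lia].
  - intros i j (Hi & H1 & H2) (_ & _ & H2'). apply (blocks i Hi); lia.
Qed.

End Blocks.

Section Construction.
Context {Act : Type} {tau : Act} {A B : automaton tau} (b : state A -> state B -> Prop).
Context (al : frag Act (state A)).
Context (init : fin_path B) (seg : nat -> fin_path B) (f : nat -> state B).
Hypothesis init_ok : initial_segment (b (fst al 0)) (f 0) init.
Hypothesis seg_ok : forall k, Index al (S k) ->
  step_segment (b (fst al k)) (b (fst al (S k))) (fact al (S k)) (f k) (f (S k)) (seg k).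

Fixpoint run_hi (k : nat) : nat :=
  match k with 0 => plen init | S k => run_hi k + plen (seg k) end.

(* The concatenation of [init] and [seg 0], ..., [seg (k-1)]: segment k is glued in at
   index run_hi k, where its first state f k is already the last state of the run. *)
Fixpoint run_st (k : nat) : nat -> state B :=
  match k with
  | 0 => pst init
  | S k => fun j => if j <=? run_hi k then run_st k j else pst (seg k) (j - run_hi k)
  end.

Fixpoint run_act (k : nat) : nat -> Act :=
  match k with
  | 0 => pact init
  | S k => fun j => if j <=? run_hi k then run_act k j else pact (seg k) (j - run_hi k)
  end.

Lemma run_hi_mono k k' : k <= k' -> run_hi k <= run_hi k'.
Proof. induction 1 as [|k' _ IH]; simpl; lia. Qed.

Lemma run_stable k j : j <= run_hi k ->
  run_st (S k) j = run_st k j /\ run_act (S k) j = run_act k j.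
Proof. intro Hj. simpl. now rewrite (proj2 (Nat.leb_le j (run_hi k)) Hj). Qed.

Lemma run_act_seg k j : run_hi k < j -> run_act (S k) j = pact (seg k) (j - run_hi k).
Proof. intro Hj. simpl. now rewrite (proj2 (Nat.leb_gt j (run_hi k)) Hj). Qed.

Lemma run_last k : Index al k -> run_st k (run_hi k) = f k.
Proof.
  induction k as [|k IH]; intro Hk; [apply init_ok|].
  destruct (seg_ok k Hk) as (Hst & Hend & _). simpl.
  destruct (Nat.leb_spec (run_hi k + plen (seg k)) (run_hi k)) as [Hle|Hgt].
  - replace (run_hi k + plen (seg k)) with (run_hi k) by lia.
    rewrite IH by (apply (Index_down al k (S k)); auto).
    rewrite <- Hst, <- Hend. f_equal. lia.
  - rewrite <- Hend. f_equal. lia.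
Qed.

Lemma run_st_seg k j : Index al (S k) -> run_hi k <= j ->
  run_st (S k) j = pst (seg k) (j - run_hi k).
Proof.
  intros Hk Hj. simpl. destruct (Nat.leb_spec j (run_hi k)) as [Hle|Hgt]; [|reflexivity].
  replace j with (run_hi k) by lia. rewrite Nat.sub_diag.
  rewrite run_last by (apply (Index_down al k (S k)); auto).
  symmetry. apply (seg_ok k Hk).
Qed.

Lemma run_path k : Index al k -> path B (run_st k) (run_act k) (run_hi k).
Proof.
  induction k as [|k IH]; intros Hk j Hj; [apply init_ok; exact Hj|].
  simpl in Hj. destruct (le_lt_dec (S j) (run_hi k)) as [Hle|Hlt].
  - rewrite (proj1 (run_stable k j ltac:(lia))), (proj1 (run_stable k (S j) Hle)),
      (proj2 (run_stable k (S j) Hle)).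
    apply IH; [apply (Index_down al k (S k)); auto|exact Hle].
  - rewrite !run_st_seg, run_act_seg by (auto; lia).
    replace (S j - run_hi k) with (S (j - run_hi k)) by lia.
    apply (seg_ok k Hk). lia.
Qed.

Lemma run_block k : Index al k ->
  tau_block B (b (fst al k)) (run_st k) (run_act k)
    (block_lo run_hi (fun i => poff (seg i)) k) (run_hi k).
Proof.
  destruct k as [|k]; intro Hk.
  - destruct init_ok as (_ & _ & Hoff & _ & Hblock). simpl. rewrite Hoff in Hblock. exact Hblock.
  - destruct (seg_ok k Hk) as (_ & _ & _ & _ & _ & Hle & HQ & Htau).
    cbn [block_lo run_hi].
    split; [lia|split].
    + intros j H1 H2. rewrite run_st_seg by (auto; lia). apply HQ; lia.
    + intros j H1 H2. rewrite run_act_seg by lia. apply Htau; lia.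
Qed.

Lemma run_link k : Index al (S k) ->
  poff (seg k) = 0 /\ fact al (S k) = tau \/
  poff (seg k) = 1 /\ run_act (S k) (S (run_hi k)) = fact al (S k).
Proof.
  intro Hk. destruct (seg_ok k Hk) as (_ & _ & _ & [Hlink|[Hoff Hact]] & _); [now left|right].
  split; [exact Hoff|]. rewrite run_act_seg by lia.
  now replace (S (run_hi k) - run_hi k) with 1 by lia.
Qed.

Lemma run_range : exists fl : option nat,
  (forall j, match fl with Some M => j <= M | None => True end <->
             exists i, Index al i /\ j <= run_hi i) /\
  (is_finite al -> exists M, fl = Some M).
Proof.
  unfold Index, is_finite. destruct (flen al) as [K|].
  - exists (Some (run_hi K)). split; [|eauto]. intro j. split; [eauto|].
    intros (i & Hi & Hj). pose proof (run_hi_mono i K Hi). lia.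
  - destruct (sup_exists run_hi) as [fl Hfl]. exists fl. split.
    + intro j. rewrite Hfl. split; intros [i Hi]; exists i; tauto.
    + intros [K HK]. discriminate.
Qed.

Lemma chain_related_execution : exists al',
  execution B al' /\ R_related b al al' /\ (is_finite al -> is_finite al').
Proof.
  destruct (stable_limit run_st run_hi run_hi_mono
              (fun k j Hj => proj1 (run_stable k j Hj))) as [w Hw].
  destruct (stable_limit run_act run_hi run_hi_mono
              (fun k j Hj => proj2 (run_stable k j Hj))) as [c Hc].
  assert (Hagree : forall k j, j <= run_hi k -> w j = run_st k j /\ c j = run_act k j)
    by (intros; auto).
  destruct run_range as (fl & Hrange & Hfinite).
  exists (Build_frag w c fl). split; [split|split].
  - intros j Hj. apply Hrange in Hj as (i & Hi & Hj).
    apply (path_agree B (run_st i) (run_act i) w c (run_hi i)); auto.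
    apply run_path, Hi.
  - simpl. rewrite (Hw 0 0) by lia. apply init_ok.
  - apply (blocks_related b al _ run_hi (fun i => poff (seg i))).
    + intros i Hi. apply (tau_block_agree B _ (run_st i) (run_act i)); auto.
      apply run_block, Hi.
    + intros i Hi. destruct (run_link i Hi) as [Hlink|[Hoff Hact]]; [now left|right].
      split; [exact Hoff|]. simpl. rewrite <- Hact. apply Hagree. simpl.
      destruct (seg_ok i Hi) as (_ & _ & _ & _ & _ & Hle & _). lia.
    + exact Hrange.
  - intro Hal. destruct (Hfinite Hal) as [M ->]. exists M. reflexivity.
Qed.

End Construction.

Section Chains.
Context {Act : Type} {tau : Act} {A B : automaton tau} (b : state A -> state B -> Prop).
Context (NS : Type) (lt : NS -> NS -> Prop) (n : norm_dom A -> state B -> NS).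
Hypothesis Hbs : normed_backward_simulation A B b NS lt n.
Context (al : frag Act (state A)) (Hal : execution A al).

(* Vacuous beyond the end of [al], so that every level of the chain has a predecessor. *)
Definition segment_edge (k : nat) (v u : state B) : Prop :=
  Index al (S k) -> exists p,
    step_segment (b (fst al k)) (b (fst al (S k))) (fact al (S k)) v u p.

Lemma segment_edge_back k u : b (fst al (S k)) u ->
  exists v, b (fst al k) v /\ segment_edge k v u.
Proof.
  intro Hu. destruct (classic (Index al (S k))) as [Hk|Hk].
  - destruct (step_segment_exists A B b NS lt n Hbs _ _ _ (proj1 Hal k Hk) u Hu)
      as (v & p & Hp). exists v. split; [apply Hp|]. intros _. exists p. exact Hp.
  - destruct Hbs as (_ & Htotal & _). destruct (Htotal (fst al k)) as [v Hv].
    exists v. split; [exact Hv|]. intro. contradiction.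
Qed.

Lemma related_execution_of_chain f :
  b (fst al 0) (f 0) -> (forall k, segment_edge k (f k) (f (S k))) ->
  exists al', execution B al' /\ R_related b al al' /\ (is_finite al -> is_finite al').
Proof.
  intros Hf0 Hedge.
  destruct (initial_segment_exists A B b NS lt n Hbs _ (proj2 Hal) (f 0) Hf0) as [init Hinit].
  destruct (choice (fun k p => Index al (S k) ->
      step_segment (b (fst al k)) (b (fst al (S k))) (fact al (S k)) (f k) (f (S k)) p))
    as [seg Hseg].
  { intro k. destruct (classic (Index al (S k))) as [Hk|Hk].
    - destruct (Hedge k Hk) as [p Hp]. eauto.
    - exists (stay B (f k)). intro. contradiction. }
  exact (chain_related_execution b al init seg f Hinit Hseg).
Qed.

End Chains.

Theorem mainTheorem2 (Act : Type) (tau : Act) (A B : automaton tau)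
  (b : state A -> state B -> Prop) (S : Type) (lt : S -> S -> Prop)
  (n : norm_dom A -> state B -> S) :
  normed_backward_simulation A B b S lt n ->
  fin_exec_corr A B b /\ (image_finite b -> exec_corr A B b).
Proof.
  intro Hbs. pose proof Hbs as (_ & Htotal & _). split.
  - intros al Hal [K HK].
    destruct (Htotal (fst al K)) as [u Hu].
    destruct (backward_chain _ _ (segment_edge_back b S lt n Hbs al Hal) K u Hu)
      as (f & _ & Hf0 & Hchain).
    destruct (related_execution_of_chain b S lt n Hbs al Hal f Hf0) as (al' & ? & ? & Hfin).
    + intros k Hk. assert (Hlt : k < K) by (unfold Index in Hk; rewrite HK in Hk; lia).
      exact (proj2 (Hchain k (Nat.le_0_l k) Hlt) Hk).
    + exists al'. split; [assumption|]. split; [apply Hfin; exists K; exact HK|assumption].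
  - intros Himg al Hal.
    destruct (koenig _ _ (segment_edge_back b S lt n Hbs al Hal) (fun k => Himg (fst al k))
                (fun k => Htotal (fst al k))) as [f Hf].
    destruct (related_execution_of_chain b S lt n Hbs al Hal f (proj1 (Hf 0)))
      as (al' & ? & ? & _); [intro k; apply Hf|].
    exists al'. split; assumption.
Qed.
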